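(* Let $\mathbb{A}\colon\mathbb{R}^d\to\mathbb{R}^d$ be Lipschitz continuous, $X_0\in\mathbb{R}^d$, $T>0$. (i) If $X$ solves the Anchor ODE $\dot X(t)=-\mathbb{A}(X(t))+\frac1t(X_0-X(t))$, $X(0)=X_0$, then $\dot X(t)=-\int_0^t H(t,s)\mathbb{A}(X(s))\,ds$ with H-kernel $H(t,s)=-\frac{s}{t^2}+\delta(s-t)$, i.e. $\dot X(t)=\frac{1}{t^2}\int_0^t s\,\mathbb{A}(X(s))\,ds-\mathbb{A}(X(t))$. (ii) The H-dual ODE, with kernel $H^A(t,s):=H(T-s,T-t)=-\frac{T-t}{(T-s)^2}+\delta(s-t)$, namely $\dot X(t)=\int_0^t\frac{T-t}{(T-s)^2}\mathbb{A}(X(s))\,ds-\mathbb{A}(X(t))$ on $[0,T)$ with $X(0)=X_0$, is the Dual-Anchor ODE: if $X$ solves it and $Z(t):=-\dot X(t)-\mathbb{A}(X(t))$, then $Z(0)=0$ and \[ \dot X(t)=-Z(t)-\mathbb{A}(X(t)),\qquad \dot Z(t)=-\frac{1}{T-t}Z(t)-\frac{1}{T-t}\mathbb{A}(X(t)). \] Hence the Anchor ODE and the Dual-Anchor ODE are H-duals of each other.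
   Context: An ODE is in H-kernel form with kernel $H(t,s)$ if $\dot X(t)=-\int_0^tH(t,s)\mathbb{A}(X(s))\,ds$, where $\delta$ denotes the Dirac delta with the convention $\int_0^t\delta(s-t)f(s)\,ds=f(t)$. For a fixed terminal time $T$, the H-dual ODE is the one with kernel $H^A(t,s)=H(T-s,T-t)$. *)

From HB Require Import structures.
From mathcomp Require Import all_boot all_order all_algebra.
From mathcomp Require Import all_classical all_reals all_analysis.
Set Implicit Arguments. Unset Strict Implicit. Unset Printing Implicit Defensive.
Import Order.TTheory GRing.Theory Num.Theory.
Import numFieldNormedType.Exports.
Local Open Scope classical_set_scope.
Local Open Scope ring_scope.

Definition vint (R : realType) (d : nat) (a b : R) (f : R -> 'rV[R]_d)
  : 'rV[R]_d :=
  \row_i (\int[@lebesgue_measure R]_(s in `[a, b]) f s ord0 i).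

(* Right-hand side of an ODE in H-kernel form whose kernel is
   H(t,s) = Hreg(t,s) + delta(s - t):
   Xdot(t) = - int_0^t H(t,s) A(X(s)) ds
           = - int_0^t Hreg(t,s) A(X(s)) ds - A(X(t)). *)
Definition hkernel_rhs (R : realType) (d : nat) (Hreg : R -> R -> R)
  (A : 'rV[R]_d -> 'rV[R]_d) (X : R -> 'rV[R]_d) (t : R) : 'rV[R]_d :=
  - vint 0 t (fun s => Hreg t s *: A (X s)) - A (X t).

(* H-dual kernel for terminal time T: H^A(t,s) = H(T-s, T-t).
   (The delta part delta(s-t) is invariant under this map.) *)
Definition hdual (R : realType) (T : R) (H : R -> R -> R) : R -> R -> R :=
  fun t s => H (T - s) (T - t).

(* Regular part of the Anchor kernel H(t,s) = -s/t^2 + delta(s-t). *)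
Definition anchor_Hreg (R : realType) : R -> R -> R :=
  fun t s => - (s / t ^+ 2).

Definition is_rderive (R : realType) (d : nat) (f : R -> 'rV[R]_d) (t : R)
  (v : 'rV[R]_d) : Prop :=
  h^-1 *: (f (h + t) - f t) @[h --> 0^'+] --> v.

From HB Require Import structures.
From mathcomp Require Import all_boot all_order all_algebra.
From mathcomp Require Import all_classical all_reals all_analysis.
From mathcomp Require Import ring lra.
Import Order.TTheory GRing.Theory Num.Theory.
Import numFieldNormedType.Exports.
Set Implicit Arguments. Unset Strict Implicit. Unset Printing Implicit Defensive.
Local Open Scope classical_set_scope.
Local Open Scope ring_scope.

(* Anchor ODE: along a solution, (t (X0 - X t))' = t A(X t), so the moment
   int_0^t s A(X s) ds equals t (X0 - X t); substituting it for X0 - X t in the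
   ODE gives the H-kernel form.
   Dual ODE: the H-dual kernel -(T - t)/(T - s)^2 factors, so Z t equals
   (t - T) int_0^t A(X s)/(T - s)^2 ds.  Differentiating this product gives the
   Dual-Anchor equation for Z; at t = 0 only a right derivative is available,
   and since the integral vanishes there the factor t - T only needs to be
   continuous. *)

Lemma lipschitz_continuous (R : realFieldType) (V W : normedModType R)
  (f : V -> W) : lipschitz f -> continuous f.
Proof.
move=> [M [Mreal lipM]] x.
have k_gt0 : 0 < 1 + `|M| by rewrite ltr_pwDl.
have /= lip := lipM (1 + `|M|) (ltr_pwDl ltr01 (real_ler_norm Mreal)).
apply/cvgrPdist_lt => e e0; near=> y.
apply: le_lt_trans (lip (x, y) (conj I I)) _; rewrite -ltr_pdivlMl //.
near: y; apply/nbhs_normP; exists ((1 + `|M|)^-1 * e) => //=.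
by rewrite mulr_gt0 // invr_gt0.
Unshelve. all: by end_near. Qed.

Lemma within_continuousZ {T : topologicalType} {K : numFieldType}
    {V : normedModType K} (A : set T) (k : T -> K) (f : T -> V) :
  {within A, continuous k} -> {within A, continuous f} ->
  {within A, continuous (fun x => k x *: f x)}.
Proof. by move=> ck cf x; apply: cvgZ; [exact: ck|exact: cf]. Qed.

Lemma within_continuous_integrable (R : realType) (g : R -> R) (a b : R) :
  {within `[a, b], continuous g} ->
  (@lebesgue_measure R).-integrable `[a, b] (EFin \o g).
Proof. by apply: continuous_compact_integrable; exact: segment_compact. Qed.

Lemma within_continuous_itvcc_derive (R : realType) (V : normedModType R)
    (f df : R -> V) (a b c : R) : a < b -> b < c ->
  (forall t, a < t < c -> is_derive t 1 f (df t)) ->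
  f x @[x --> a^'+] --> f a -> {within `[a, b], continuous f}.
Proof.
move=> ab bc f_df fa.
have cf t : a < t < c -> {for t, continuous f}.
  by move=> /f_df [ft _]; exact/differentiable_continuous/derivable1_diffP.
apply/(continuous_within_itvP _ ab); split => //.
- move=> t; rewrite in_itv /= => /andP[a_t tb].
  by apply: cf; rewrite a_t (lt_trans tb).
- by apply: cvg_at_left_filter; apply: cf; rewrite ab.
Qed.

Section row_calculus.
Context {R : realType} {d : nat}.
Implicit Types (f : R -> 'rV[R]_d) (t : R) (v : 'rV[R]_d).

Lemma cvg_rowP {T} (F : set_system T) {FF : Filter F} (f : T -> 'rV[R]_d)
    (l : 'rV[R]_d) :
  f @ F --> l <-> forall i, (fun x => f x ord0 i) @ F --> l ord0 i.
Proof.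
split=> [fl i|fl].
  exact: cvg_trans (cvg_app _ fl) (@coord_continuous R 1 d ord0 i l).
apply/cvgrPdist_le => e e0.
have : \forall x \near F, forall i, `|l ord0 i - f x ord0 i| <= e.
  by apply: filter_forall => i; exact: (cvgrPdist_le _ _).1 (fl i) e e0.
apply: filterS => x fxe.
rewrite /Num.Def.normr /= mx_normrE (bigmax_le _ (ltW e0)) //= => -[i j] _.
by rewrite !mxE (ord1 i).
Qed.

Lemma is_derive_rowP f t v :
  is_derive t 1 f v <-> forall i, is_derive t 1 (fun x => f x ord0 i) (v ord0 i).
Proof.
split=> [[fd <-] i|fd].
  by apply: DeriveDef; [move/derivable_mxP: fd; apply|rewrite derive_mx // mxE].
have df : derivable f t 1.
  by apply/derivable_mxP => i j; rewrite (ord1 i); have [] := fd j.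
apply: DeriveDef => //; rewrite derive_mx //; apply/matrixP => i j.
by rewrite mxE (ord1 i) derive_val.
Qed.

Lemma within_continuous_entry (D : set R) f i :
  {within D, continuous f} -> {within D, continuous (fun x => f x ord0 i)}.
Proof.
apply: (@within_continuous_comp _ _ _ D f (fun M : 'rV[R]_d => M ord0 i)) => M _.
exact: coord_continuous.
Qed.

Lemma is_derive_rowZ (p : R -> R) f t dp v :
  is_derive t 1 p dp -> is_derive t 1 f v ->
  is_derive t 1 (fun x => p x *: f x) (dp *: f t + p t *: v).
Proof.
move=> pd /is_derive_rowP fd; apply/is_derive_rowP => i.
have -> : (fun x => (p x *: f x) ord0 i) = p * (fun x => f x ord0 i).
  by apply/funext => x; rewrite !mxE.
apply: is_derive_eq (is_deriveM pd (fd i)) _.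
by rewrite !mxE addrC; congr (_ + _); exact: mulrC.
Qed.

Lemma is_rderive_cvg f t v : is_rderive f t v -> f (h + t) @[h --> 0^'+] --> f t.
Proof.
move=> fv.
have : f t + h *: (h^-1 *: (f (h + t) - f t)) @[h --> 0^'+] --> f t + 0 *: v.
  apply: cvgD; first exact: cvg_cst.
  by apply: cvgZ fv; exact: cvg_at_right_filter cvg_id.
rewrite scale0r addr0; apply: cvg_trans; apply: near_eq_cvg; near=> h.
have h_gt0 : 0 < h by near: h; exact: nbhs_right_gt.
by rewrite scalerA mulfV ?gt_eqF // scale1r addrC subrK.
Unshelve. all: by end_near. Qed.

Lemma is_rderive_near_eq f g t v :
  (\forall h \near 0^'+, f (h + t) = g (h + t)) -> f t = g t ->
  is_rderive f t v -> is_rderive g t v.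
Proof.
move=> fg ft; apply: cvg_trans; apply: near_eq_cvg.
by apply: filterS fg => h fgh; rewrite fgh ft.
Qed.

Lemma is_rderiveZ_root (p : R -> R) f t v :
  {for t, continuous p} -> f t = 0 -> is_rderive f t v ->
  is_rderive (fun x => p x *: f x) t (p t *: v).
Proof.
move=> cp ft0 fv; rewrite /is_rderive.
have -> : (fun h => h^-1 *: (p (h + t) *: f (h + t) - p t *: f t)) =
          (fun h => p (h + t) *: (h^-1 *: (f (h + t) - f t))).
  by apply/funext => h; rewrite ft0 !scaler0 !subr0 !scalerA mulrC.
apply: cvgZ fv.
have : h + t @[h --> 0] --> 0 + t by apply: cvgD; [exact: cvg_id|exact: cvg_cst].
by rewrite add0r => /cvg_at_right_filter /cvg_comp; apply.
Qed.

End row_calculus.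
Arguments within_continuous_entry {R d D f} i.

Section vint.
Context {R : realType} {d : nat}.
Local Notation mu := (@lebesgue_measure R).
Implicit Types (f : R -> 'rV[R]_d) (a b t : R).

Lemma vintxx a f : vint a a f = 0.
Proof. by apply/matrixP => i j; rewrite !mxE set_itv1 Rintegral_set1. Qed.

Lemma vintZ a b (c : R) f : {within `[a, b], continuous f} ->
  vint a b (fun s => c *: f s) = c *: vint a b f.
Proof.
move=> cf; apply/matrixP => i j; rewrite !mxE.
under eq_Rintegral => s _ do rewrite mxE.
by rewrite RintegralZl //; exact/within_continuous_integrable/within_continuous_entry.
Qed.

Lemma vint_FTC2 f F a b : a < b ->
  {within `[a, b], continuous f} -> {within `[a, b], continuous F} ->
  (forall t, a < t < b -> is_derive t 1 F (f t)) ->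
  vint a b f = F b - F a.
Proof.
move=> ab cf cF dF; apply/matrixP => i0 i; rewrite (ord1 i0) !mxE.
have [_ Fa Fb] := (continuous_within_itvP _ ab).1 (within_continuous_entry i cF).
have dFi t : t \in `]a, b[ -> is_derive t 1 (fun x => F x ord0 i) (f t ord0 i).
  by rewrite in_itv /= => /dF /is_derive_rowP.
rewrite /Rintegral (@continuous_FTC2 _ _ (fun x => F x ord0 i) _ _ ab
  (within_continuous_entry i cf)) //.
- by split => // t /dFi [].
- by move=> t /dFi Fi; rewrite derive1E derive_val.
Qed.

Lemma vint_FTC1 f a b t : a < t < b -> {within `[a, b], continuous f} ->
  is_derive t 1 (fun x => vint a x f) (f t).
Proof.
move=> /andP[a_t tb] cf; apply/is_derive_rowP => i.
have cfi := within_continuous_entry i cf.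
have ft : {for t, continuous (fun x => f x ord0 i)}.
  apply: within_continuous_continuous (lt_trans a_t tb) cfi _.
  by rewrite in_itv /= a_t.
have -> : (fun x => vint a x f ord0 i) =
          (fun x => \int[mu]_(s in `[a, x]) f s ord0 i).
  by apply/funext => x; rewrite mxE.
have [dF F'] := continuous_FTC1_closed tb (within_continuous_integrable cfi) a_t ft.
by apply: DeriveDef => //; rewrite -derive1E.
Qed.

Lemma Rintegral_mean_cvg_right (g : R -> R) a b : a < b ->
  {within `[a, b], continuous g} ->
  h^-1 * \int[mu]_(s in `[a, h + a]) g s @[h --> 0^'+] --> g a.
Proof.
move=> ab cg; have [_ ga _] := (continuous_within_itvP _ ab).1 cg.
apply/cvgrPdist_le => e e0.
have [r /= r0 ga_near] := (cvgrPdist_le _ _).1 ga e e0.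
near=> h.
have h0 : 0 < h by near: h; exact: nbhs_right_gt.
have hr : h < r by near: h; exact: nbhs_right_lt.
have hb : h < b - a by near: h; apply: nbhs_right_lt; rewrite subr_gt0.
have cgh : {within `[a, h + a], continuous g}.
  by apply: continuous_subspaceW cg; apply: subset_itvl; rewrite bnd_simp; lra.
have int_cst (c : R) : mu.-integrable `[a, h + a] (EFin \o cst c).
  by apply: within_continuous_integrable => x; exact: cvg_cst.
have ga_g : {within `[a, h + a], continuous (fun s => g a - g s)}.
  by move=> x; apply: cvgB; [exact: cvg_cst|exact: cgh].
have mu_itv : fine (mu `[a, h + a]) = h.
  by rewrite lebesgue_measure_itv /= lte_fin ltrDr h0 /= addrK.
have -> : g a - h^-1 * \int[mu]_(s in `[a, h + a]) g s =
          h^-1 * \int[mu]_(s in `[a, h + a]) (g a - g s).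
  rewrite RintegralB ?int_cst ?(within_continuous_integrable cgh) //.
  by rewrite Rintegral_cst // mu_itv mulrBr mulrCA mulVf ?gt_eqF // mulr1.
rewrite normrM gtr0_norm ?invr_gt0 // ler_pdivrMl //.
apply: le_trans (le_normr_Rintegral _ _) _ => //.
  exact: within_continuous_integrable.
apply: le_trans (le_Rintegral (f2 := cst e) _ _ _ _) _ => //.
- by apply: within_continuous_integrable => x; apply: cvg_norm; exact: ga_g.
- move=> x; rewrite /= in_itv /= => /andP[]; rewrite le_eqVlt.
  move=> /predU1P[<- _|ax xh]; first by rewrite subrr normr0 ltW.
  by apply: ga_near => //=; rewrite distrC gtr0_norm ?subr_gt0 //; lra.
- by rewrite Rintegral_cst // mu_itv mulrC.
Unshelve. all: by end_near. Qed.

Lemma is_rderive_vint f a b : a < b -> {within `[a, b], continuous f} ->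
  is_rderive (fun x => vint a x f) a (f a).
Proof.
move=> ab cf; rewrite /is_rderive; apply/cvg_rowP => i.
have -> : (fun h => (h^-1 *: (vint a (h + a) f - vint a a f)) ord0 i) =
          (fun h => h^-1 * \int[mu]_(s in `[a, h + a]) f s ord0 i).
  by apply/funext => h; rewrite vintxx subr0 !mxE.
exact: Rintegral_mean_cvg_right ab (within_continuous_entry i cf).
Qed.

End vint.

Section anchor.
Context {R : realType} {d : nat} (A : 'rV[R]_d -> 'rV[R]_d) (X0 : 'rV[R]_d)
  (T : R) (X dX : R -> 'rV[R]_d).
Hypotheses (cA : continuous A) (X_0 : X 0 = X0)
  (X_cvg0 : X x @[x --> 0^'+] --> X0)
  (X_derive : forall t, 0 < t < T -> is_derive t 1 X (dX t))
  (anchor_ode : forall t, 0 < t < T -> dX t = - A (X t) + t^-1 *: (X0 - X t)).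

Lemma anchor_solution_continuous t : 0 < t < T ->
  {within `[0, t], continuous X}.
Proof.
move=> /andP[t0 tT].
by apply: within_continuous_itvcc_derive t0 tT X_derive _; rewrite X_0.
Qed.

Lemma anchor_integrand_continuous t : 0 < t < T ->
  {within `[0, t], continuous (fun s => s *: A (X s))}.
Proof.
move=> tT; apply: within_continuousZ.
  by apply: continuous_subspaceT => s; exact: cvg_id.
exact: (@within_continuous_comp _ _ _ _ X A (fun y _ => @cA y)
  (anchor_solution_continuous tT)).
Qed.

Lemma anchor_moment t : 0 < t < T ->
  vint 0 t (fun s => s *: A (X s)) = t *: (X0 - X t).
Proof.
move=> tT; have /andP[t0 t_T] := tT.
have dF u : 0 < u < t -> is_derive u 1 (fun u => u *: (X0 - X u)) (u *: A (X u)).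
  move=> /andP[u0 ut]; have uT : 0 < u < T by rewrite u0 (lt_trans ut t_T).
  apply: is_derive_eq (is_derive_rowZ (is_derive_id u 1)
    (is_deriveB (is_derive_cst X0 u 1) (X_derive uT))) _.
  rewrite anchor_ode //; apply/matrixP => i j; rewrite !mxE.
  by field; rewrite gt_eqF.
have cF : {within `[0, t], continuous (fun u => u *: (X0 - X u))}.
  apply: within_continuousZ; first by apply: continuous_subspaceT => s; exact: cvg_id.
  by move=> s; apply: cvgB; [exact: cvg_cst|exact: anchor_solution_continuous].
by rewrite (vint_FTC2 t0 (anchor_integrand_continuous tT) cF dF) /= scale0r subr0.
Qed.

Lemma anchor_hkernel_moment t : 0 < t < T ->
  dX t = (t ^+ 2)^-1 *: vint 0 t (fun s => s *: A (X s)) - A (X t).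
Proof.
move=> tT; have t_neq0 : t != 0 by case/andP: tT => t0 _; rewrite gt_eqF.
rewrite anchor_moment // anchor_ode // scalerA addrC.
by rewrite expr2 invfM -mulrA mulVf // mulr1.
Qed.

Lemma anchor_hkernel_rhs t : 0 < t < T ->
  dX t = hkernel_rhs (@anchor_Hreg R) A X t.
Proof.
move=> tT; rewrite /hkernel_rhs /anchor_Hreg.
have -> : (fun s => - (s / t ^+ 2) *: A (X s)) =
          (fun s => - (t ^+ 2)^-1 *: (s *: A (X s))).
  by apply/funext => s; rewrite scalerA mulNr mulrC.
rewrite vintZ; last exact: anchor_integrand_continuous.
by rewrite scaleNr opprK -anchor_hkernel_moment.
Qed.

End anchor.

Section dual_anchor.
Context {R : realType} {d : nat} (A : 'rV[R]_d -> 'rV[R]_d) (T : R)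
  (X dX : R -> 'rV[R]_d).
Hypotheses (cA : continuous A) (T_gt0 : 0 < T)
  (X_rderive0 : is_rderive X 0 (dX 0))
  (X_derive : forall t, 0 < t < T -> is_derive t 1 X (dX t))
  (dual_ode : forall t, 0 <= t < T ->
     dX t = hkernel_rhs (hdual T (@anchor_Hreg R)) A X t).

Local Notation Z t := (- dX t - A (X t)).
Let g s := ((T - s) ^+ 2)^-1 *: A (X s).

Let X_cvg0 : X x @[x --> 0^'+] --> X 0.
Proof.
have := is_rderive_cvg X_rderive0.
by rewrite (_ : (fun h => X (h + 0)) = X) //; apply/funext => h; rewrite addr0.
Qed.

Lemma dual_weight_continuous b : 0 <= b < T -> {within `[0, b], continuous g}.
Proof.
move=> /andP[b0 bT]; have [bc cT] := midf_lt bT.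
set c := (b + T) / 2 in bc cT.
have c0 : 0 < c by apply: le_lt_trans bc.
apply: (@continuous_subspaceW _ _ _ `[0, c]).
  by apply: subset_itvl; rewrite bnd_simp ltW.
apply: within_continuousZ; last first.
  exact: (@within_continuous_comp _ _ _ _ X A (fun y _ => @cA y)
    (within_continuous_itvcc_derive c0 cT X_derive X_cvg0)).
apply: continuous_in_subspaceT => s; rewrite inE /= in_itv /= => /andP[_ sc].
have Ts : T - s != 0 by rewrite subr_eq0 gt_eqF // (le_lt_trans sc cT).
apply: (continuousV (s := fun u : R => (T - u) ^+ 2)); first by rewrite expf_neq0.
have cT_s : {for s, continuous (fun u : R => T - u)}.
  by apply: cvgB; [exact: cvg_cst|exact: cvg_id].
exact: continuous_comp cT_s (@exprn_continuous R 2 (T - s)).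
Qed.

Lemma dual_Z_eq t : 0 <= t < T -> Z t = (t - T) *: vint 0 t g.
Proof.
move=> tT; rewrite dual_ode // /hkernel_rhs opprD !opprK addrK.
rewrite -vintZ; last exact: dual_weight_continuous.
congr vint; apply/funext => s; rewrite /g scalerA /hdual /anchor_Hreg.
by rewrite -mulNr opprB.
Qed.

Lemma dual_Z0 : Z 0 = 0.
Proof. by rewrite dual_Z_eq ?lexx ?T_gt0 // vintxx scaler0. Qed.

Lemma dual_Z_rderive0 :
  is_rderive (fun t => Z t) 0 (- T^-1 *: Z 0 - T^-1 *: A (X 0)).
Proof.
have T2 : 0 < T / 2 by rewrite divr_gt0.
have T2T : 0 <= T / 2 < T by rewrite ltW //= ltr_pdivrMr // ltr_pMr // ltr1n.
have cp : {for 0, continuous (fun t : R => t - T)}.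
  by apply: cvgB; [exact: cvg_id|exact: cvg_cst].
have ZV := is_rderiveZ_root cp (vintxx 0 g)
  (is_rderive_vint T2 (dual_weight_continuous T2T)).
have -> : - T^-1 *: Z 0 - T^-1 *: A (X 0) = (0 - T) *: g 0.
  rewrite dual_Z0 /g; apply/matrixP => i j; rewrite !mxE.
  by field; rewrite gt_eqF.
apply: is_rderive_near_eq ZV; last by rewrite vintxx scaler0 dual_Z0.
near=> h.
have h0 : 0 < h by near: h; exact: nbhs_right_gt.
have hT : h < T by near: h; exact: nbhs_right_lt.
by rewrite addr0 dual_Z_eq // (ltW h0) hT.
Unshelve. all: by end_near. Qed.

Lemma dual_Z_derive t : 0 < t < T ->
  is_derive t 1 (fun t => Z t) (- (T - t)^-1 *: Z t - (T - t)^-1 *: A (X t)).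
Proof.
move=> /andP[t0 tT]; have [tc cT] := midf_lt tT.
set c := (t + T) / 2 in tc cT.
have ZV : \forall u \near t, (u - T) *: vint 0 u g = Z u.
  near=> u.
  have : u \in `]0, T[ by near: u; apply: near_in_itvoo; rewrite in_itv /= t0 tT.
  by rewrite in_itv /= => /andP[u0 uT]; rewrite dual_Z_eq // (ltW u0) uT.
apply: (near_eq_is_derive ZV).
have t_in : 0 < t < c by rewrite t0 tc.
have c_in : 0 <= c < T by rewrite cT (ltW (lt_trans t0 tc)).
have Vt := vint_FTC1 t_in (dual_weight_continuous c_in).
have dp : is_derive t 1 (fun u : R => u - T) 1.
  apply: is_derive_eq (is_deriveB (is_derive_id t 1) (is_derive_cst T t 1)) _.
  by rewrite subr0.
apply: is_derive_eq (is_derive_rowZ dp Vt) _.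
rewrite dual_Z_eq ?(ltW t0) ?tT // /g; apply/matrixP => i j; rewrite !mxE.
by field; rewrite subr_eq0 gt_eqF.
Unshelve. all: by end_near. Qed.

End dual_anchor.

Theorem proposition7p2 (R : realType) (d : nat)
  (A : 'rV[R]_d -> 'rV[R]_d) (X0 : 'rV[R]_d) (T : R) :
  lipschitz A -> 0 < T ->
  (* (i) Anchor ODE  ==>  H-kernel form with H(t,s) = -s/t^2 + delta(s-t) *)
  (forall (X dX : R -> 'rV[R]_d),
     X 0 = X0 ->
     X x @[x --> 0^'+] --> X0 ->
     (forall t, 0 < t < T -> is_derive t 1 X (dX t)) ->
     (forall t, 0 < t < T -> dX t = - A (X t) + t^-1 *: (X0 - X t)) ->
     forall t, 0 < t < T ->
       dX t = hkernel_rhs (@anchor_Hreg R) A X t /\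
       dX t = (t ^+ 2)^-1 *: vint 0 t (fun s => s *: A (X s)) - A (X t))
  /\
  (* (ii) H-dual ODE  ==>  Dual-Anchor ODE *)
  (forall (X dX : R -> 'rV[R]_d),
     X 0 = X0 ->
     is_rderive X 0 (dX 0) ->
     (forall t, 0 < t < T -> is_derive t 1 X (dX t)) ->
     (forall t, 0 <= t < T -> dX t = hkernel_rhs (hdual T (@anchor_Hreg R)) A X t) ->
     let Z := fun t => - dX t - A (X t) in
     (forall t, 0 <= t < T ->
        hdual T (@anchor_Hreg R) t =1 (fun s => - ((T - t) / (T - s) ^+ 2))) /\
     Z 0 = 0 /\
     is_rderive Z 0 (- (T - 0)^-1 *: Z 0 - (T - 0)^-1 *: A (X 0)) /\
     (forall t, 0 < t < T ->
        dX t = - Z t - A (X t) /\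
        is_derive t 1 Z (- (T - t)^-1 *: Z t - (T - t)^-1 *: A (X t)))).
Proof.
move=> /lipschitz_continuous cA T_gt0; split.
  move=> X dX X_0 X_cvg0 X_derive anchor_ode t tT; split.
    exact: (anchor_hkernel_rhs cA X_0 X_cvg0 X_derive anchor_ode tT).
  exact: (anchor_hkernel_moment cA X_0 X_cvg0 X_derive anchor_ode tT).
move=> X dX _ X_rderive0 X_derive dual_ode Z.
split=> [t _ s //|]; split.
  exact: (dual_Z0 cA T_gt0 X_rderive0 X_derive dual_ode).
split.
  rewrite subr0; exact: (dual_Z_rderive0 cA T_gt0 X_rderive0 X_derive dual_ode).
move=> t tT; split; first by rewrite /Z opprD !opprK addrK.
exact: (dual_Z_derive cA X_rderive0 X_derive dual_ode tT).
Qed.
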